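(* Let $q=2^f$ with $f\ge4$, let $q_0<q$ be a power of $2$ with $\gcd(q-1,q_0^2-1)=1$, and let $u\in\mathscr{U}_{q,q_0}$. Let $\eta$ be a primitive element of $\mathbb{F}_q$ with $u=(1+\eta^{q_0})/(\eta+\eta^{q_0})$, and let $k$ be an integer with $1+\eta=\eta^{k+1}$. Then the subgraph of $\Gamma_u$ induced on the neighborhood $\Omega_u\cup\Omega_{u+1}$ of the identity vertex is isomorphic to the generalized Petersen graph $GPG(q-1,k)$.
   Context: For $a,c\in\mathbb{F}_q$ let $\Phi_{a,c}=\begin{bmatrix}1&0&0\\ a&1&0\\ c&a^{q_0}&1\end{bmatrix}$, $K=\{\Phi_{a,c}: a,c\in\mathbb{F}_q\}\le GL(3,\mathbb{F}_q)$, and for $v\in\mathbb{F}_q$ let $\Omega_v=\{\Phi_{a,va^{q_0+1}}: a\in\mathbb{F}_q^*\}$. $\Gamma_u=\mathrm{Cay}(K,\Omega_u\cup\Omega_{u+1})$ is the graph with vertex set $K$, $x,y$ adjacent iff $xy^{-1}\in\Omega_u\cup\Omega_{u+1}$. $\mathscr{U}_{q,q_0}$ is the set of $u\in\mathbb{F}_q$ such that (U1) $u=(1+\eta^{q_0})/(\eta+\eta^{q_0})$ for some primitive element $\eta$ of $\mathbb{F}_q$, and (U2) $X^{q_0+1}+uX^{q_0}+(u+1)X+1$ has no roots in $\mathbb{F}_q$. For an integer $n\ge3$ and an integer $k$, $GPG(n,k)$ is the graph with vertices $c_1,\dots,c_n,c_1',\dots,c_n'$ and edges $c_ic_{i+1}$,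 $c_ic_i'$, $c_i'c_{i+k}'$ ($i=1,\dots,n$, subscripts modulo $n$). *)

From HB Require Import structures.
From mathcomp Require Import all_boot all_order all_algebra all_field.
Set Implicit Arguments. Unset Strict Implicit. Unset Printing Implicit Defensive.
Import Order.TTheory GRing.Theory Num.Theory.
Local Open Scope ring_scope.

Section Defs.
Variable F : finFieldType.

Definition Phi (q0 : nat) (a c : F) : 'M[F]_3 :=
  \matrix_(i < 3, j < 3)
    if i == j then 1
    else if ((i : nat) == 1%N) && ((j : nat) == 0%N) then a
    else if ((i : nat) == 2%N) && ((j : nat) == 0%N) then c
    else if ((i : nat) == 2%N) && ((j : nat) == 1%N) then a ^+ q0
    else 0.

Definition Kgrp (q0 : nat) : {set 'M[F]_3} :=
  [set Phi q0 a c | a in F, c in F].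

Definition Omega (q0 : nat) (v : F) : {set 'M[F]_3} :=
  [set Phi q0 a (v * a ^+ (q0 + 1)) | a in [set a : F | a != 0]].

Definition Conn (q0 : nat) (u : F) : {set 'M[F]_3} :=
  Omega q0 u :|: Omega q0 (u + 1).

Definition cay_adj (q0 : nat) (u : F) (x y : 'M[F]_3) : bool :=
  (x *m invmx y) \in Conn q0 u.

Definition Uset (q0 : nat) : {set F} :=
  [set u : F |
    [exists eta : F, ((#|F|.-1).-primitive_root eta)
                     && (u == (1 + eta ^+ q0) / (eta + eta ^+ q0))]
    && ~~ [exists x : F,
             root ('X^(q0.+1) + u%:P * 'X^q0 + (u + 1)%:P * 'X + 1) x]].

End Defs.

(* Generalized Petersen graph GPG(n,k): vertex (false, i) = c_i, (true, i) = c_i'. *)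
Definition gpg_edge (n : nat) (k : int) (x y : bool * 'I_n) : bool :=
  match x, y with
  | (false, i), (false, j) => (j%:Z == i%:Z + 1 %[mod n%:Z])%Z
  | (false, i), (true, j) => i == j
  | (true, i), (true, j) => (j%:Z == i%:Z + k %[mod n%:Z])%Z
  | _, _ => false
  end.

Arguments gpg_edge : clear implicits.

Definition gpg_adj (n : nat) (k : int) : rel (bool * 'I_n) :=
  fun x y => gpg_edge n k x y || gpg_edge n k y x.

Definition induced (T : finType) (e : rel T) (S : {set T}) : rel {x : T | x \in S} :=
  fun x y => e (val x) (val y).

Definition graph_iso (V W : finType) (eV : rel V) (eW : rel W) : Prop :=
  exists f : V -> W, bijective f /\ forall x y, eW (f x) (f y) = eV x y.

Arguments gpg_adj : clear implicits.
Arguments induced {T} e S.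

(* Work in characteristic 2 with q0 a power of 2, so that x |-> x^q0 is
   additive and [Phi q0 a c *m Phi q0 b d = Phi q0 (a + b) (c + d + a^q0 b)].
   For nonzero a, b the adjacency of Phi(a, v a^(q0+1)) and Phi(b, w b^(q0+1)),
   with v, w in {u, u+1}, is a disjunction of two polynomial equations in a, b.
   Scaled by eta + eta^q0, each is either [qform X Y = 0] with
   [qform x y = x^q0 y + x y^q0] and X, Y explicit linear forms in a, b, or the
   homogenisation of the polynomial of (U2), which never vanishes.  As
   gcd(q - 1, q0 - 1) = 1, the map x |-> x^(q0-1) is injective on F^*, so
   [qform X Y = 0] forces X = Y: every edge of the neighbourhood is one of the
   multiplicative relations b = eta^(+-1) a (inside Omega_u),
   b = (1 + eta)^(+-1) a (across) and b = eta^(+-k) a (inside Omega_(u+1)).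
   Labelling c_i by eta^i in Omega_u and c_i' by eta^i / (1 + eta) in
   Omega_(u+1) turns these relations into the edges of GPG(q - 1, k). *)

From HB Require Import structures.
From mathcomp Require Import all_boot all_order all_algebra all_field.
From mathcomp Require Import ring.
Import Order.TTheory GRing.Theory Num.Theory.
Local Open Scope ring_scope.
Set Implicit Arguments.
Unset Strict Implicit.

Lemma expf_card_pred (F : finFieldType) (x : F) : x != 0 -> x ^+ #|F|.-1 = 1.
Proof.
move=> x0; apply: (mulIf x0); rewrite mul1r -exprSr prednK ?expf_card //.
by apply: leq_ltn_trans (card_finNzRing_gt1 F).
Qed.

Lemma expf_coprime_eq1 (F : finFieldType) (m : nat) (x : F) :
  coprime #|F|.-1 m -> x != 0 -> x ^+ m = 1 -> x = 1.
Proof.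
move=> co_m x0 xm1.
have n_gt0 : (0 < #|F|.-1)%N by rewrite -subn1 subn_gt0 card_finNzRing_gt1.
have [d prim_d d_dvd] := prim_order_exists n_gt0 (expf_card_pred x0).
have : (d %| gcdn #|F|.-1 m)%N.
  by rewrite dvdn_gcd d_dvd (prim_order_dvd prim_d) xm1 /=.
by rewrite (eqP co_m) dvdn1 => /eqP d1; rewrite -(prim_expr_order prim_d) d1.
Qed.

Lemma eq_mull_self (F : fieldType) (b c : F) : b != 0 -> (b == c * b) = (c == 1).
Proof. by move=> b0; rewrite -[X in X == _]mul1r (inj_eq (mulIf b0)) eq_sym. Qed.

Section PrimitiveRootExponents.
Variables (F : fieldType) (n : nat) (z : F).
Hypothesis prim_z : n.-primitive_root z.

Lemma prim_root_neq0 : z != 0.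
Proof.
apply/eqP=> z0; have /eqP := prim_expr_order prim_z.
by rewrite z0 expr0n gtn_eqF ?(prim_order_gt0 prim_z) // eq_sym oner_eq0.
Qed.

Lemma prim_exprz1 (m : int) : (z ^ m == 1) = (n%:Z %| m)%Z.
Proof.
by case: m => m; rewrite dvdzE /= ?invr_eq1 (prim_order_dvd prim_z).
Qed.

Lemma prim_exprz_eq (i j : int) : (z ^ i == z ^ j) = (i == j %[mod n%:Z])%Z.
Proof.
have zj0 : z ^ j != 0 by rewrite expfz_neq0 ?prim_root_neq0.
rewrite eqz_mod_dvd -prim_exprz1 expfzDr ?prim_root_neq0 // -invr_expz.
by rewrite -[in RHS](inj_eq (mulIf zj0)) divfK // mul1r.
Qed.

End PrimitiveRootExponents.

Section Char2.
Variables (F : finFieldType) (q0 : nat).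
Hypothesis charF2 : 2 \in [pchar F].
Hypothesis q0_2nat : 2%N.-nat q0.

Lemma two_eq0 : 2 = 0 :> F.
Proof. by have /andP[_ /eqP] := charF2. Qed.

Lemma eq_char2 (x y : F) : (x == y) = (x + y == 0).
Proof. by rewrite addr_eq0 (oppr_pchar2 charF2). Qed.

Lemma addrK2 (x y : F) : x + y + y = x.
Proof. by rewrite -{2}(oppr_pchar2 charF2 y) addrK. Qed.

Lemma eq_char2_addr (x y x' y' : F) : x + y = x' + y' -> (x == y) = (x' == y').
Proof. by move=> e; rewrite eq_char2 e -eq_char2. Qed.

Lemma frobD (x y : F) : (x + y) ^+ q0 = x ^+ q0 + y ^+ q0.
Proof. by rewrite exprDn_pchar // (eq_pnat _ (pcharf_eq charF2)). Qed.

Lemma Phi_mul (a b c d : F) :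
  Phi q0 a c *m Phi q0 b d = Phi q0 (a + b) (c + d + a ^+ q0 * b).
Proof.
apply/matrixP => i j; rewrite !mxE !big_ord_recl big_ord0 !mxE /=.
by case: i => [[|[|[|i]]] ?] //=; case: j => [[|[|[|j]]] ?] //=;
  rewrite ?frobD; ring.
Qed.

Lemma Phi0 : Phi q0 (0 : F) 0 = 1%:M.
Proof.
have q0_gt0 : (0 < q0)%N by case/andP: q0_2nat.
apply/matrixP => i j; rewrite !mxE expr0n (gtn_eqF q0_gt0).
by case: i => [[|[|[|i]]] ?] //=; case: j => [[|[|[|j]]] ?].
Qed.

Lemma invmx_Phi (a c : F) : invmx (Phi q0 a c) = Phi q0 a (c + a ^+ q0 * a).
Proof.
have PhiK : Phi q0 a c *m Phi q0 a (c + a ^+ q0 * a) = 1%:M.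
  by rewrite Phi_mul -Phi0; congr Phi; ring: two_eq0.
have [Phi_unit _] := mulmx1_unit PhiK.
by rewrite -[RHS]mul1mx -(mulVmx Phi_unit) -mulmxA PhiK mulmx1.
Qed.

Lemma Phi_inj (a b c d : F) : Phi q0 a c = Phi q0 b d -> a = b /\ c = d.
Proof.
move=> eqPhi; have entry i j := congr1 (fun M : 'M_3 => M i j) eqPhi.
by split; [move: (entry 1 0) | move: (entry 2 0)]; rewrite !mxE.
Qed.

Lemma mem_Conn (u a c : F) : (Phi q0 a c \in Conn q0 u) =
  (a != 0) && ((c == u * a ^+ (q0 + 1)) || (c == (u + 1) * a ^+ (q0 + 1))).
Proof.
rewrite !inE; apply/orP/andP => [[]|[a0 /orP[]/eqP->]].
- by case/imsetP=> a'; rewrite inE => a'0 /Phi_inj[-> ->]; rewrite a'0 eqxx.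
- by case/imsetP=> a'; rewrite inE => a'0 /Phi_inj[-> ->]; rewrite a'0 eqxx orbT.
- by left; apply/imsetP; exists a; rewrite ?inE.
- by right; apply/imsetP; exists a; rewrite ?inE.
Qed.

Definition omega (v a : F) : 'M[F]_3 := Phi q0 a (v * a ^+ (q0 + 1)).

Lemma omega_inj (v w a b : F) :
  a != 0 -> omega v a = omega w b -> v = w /\ a = b.
Proof.
move=> a0 /Phi_inj[<- eq_vw]; split=> //.
exact: mulIf (expf_neq0 _ a0) _ _ eq_vw.
Qed.

(* [omega v a *m invmx (omega w b)] is [Phi q0 (a + b) c] with
   [c = v a^(q0+1) + (w + 1) b^(q0+1) + a^q0 b]; for a != b it lies in
   [Omega q0 t] iff [adj_defect v (w + 1) t a b = c + t (a + b)^(q0+1)]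
   vanishes. *)
Definition adj_defect (v w t a b : F) : F :=
  v * (a ^+ q0 * a) + w * (b ^+ q0 * b) + a ^+ q0 * b
  + t * ((a + b) ^+ q0 * (a + b)).

Lemma cay_adj_omega (u v w a b : F) :
  cay_adj q0 u (omega v a) (omega w b) = (a != b) &&
  ((adj_defect v (w + 1) u a b == 0) || (adj_defect v (w + 1) (u + 1) a b == 0)).
Proof.
rewrite /cay_adj /omega invmx_Phi Phi_mul mem_Conn -eq_char2 !addn1 !exprSr.
by congr (_ && (_ || _)); rewrite eq_char2 /adj_defect; congr (_ == 0); ring.
Qed.

Hypothesis q0_coprime : coprime #|F|.-1 q0.-1.

Definition qform (x y : F) : F := x ^+ q0 * y + x * y ^+ q0.

Lemma qform_eq0 (x y : F) : x != 0 -> y != 0 -> (qform x y == 0) = (x == y).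
Proof.
move=> x0 y0; rewrite -eq_char2; apply/eqP/eqP => [xy_eq | ->]; last exact: mulrC.
have r0 : x / y != 0 by rewrite mulf_neq0 ?invr_eq0.
suff /(canRL (divfK y0)) : x / y = 1 by rewrite mul1r.
apply: (expf_coprime_eq1 q0_coprime r0); apply: (mulIf r0).
rewrite mul1r -exprSr prednK; last by case/andP: q0_2nat.
by apply/eqP; rewrite exprMn exprVn eqr_div ?expf_neq0 // xy_eq.
Qed.

Section Neighbourhood.
Variables eta u : F.
Hypothesis eta_neq0 : eta != 0.
Hypothesis eta_neq1 : eta != 1.
Hypothesis u_def : u = (1 + eta ^+ q0) / (eta + eta ^+ q0).
Hypothesis no_root :
  forall x, ~~ root ('X^(q0.+1) + u%:P * 'X^q0 + (u + 1)%:P * 'X + 1) x.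

Local Notation P := (1 + eta).
Local Notation D := (eta + eta ^+ q0).

Lemma P_neq0 : P != 0.
Proof. by rewrite addrC -eq_char2. Qed.

Lemma P_neq1 : P != 1.
Proof. by rewrite -subr_eq0 addrAC subrr add0r. Qed.

Lemma D_neq0 : D != 0.
Proof.
have -> : D = qform eta 1 by rewrite /qform expr1n !mulr1 addrC.
by rewrite qform_eq0 ?oner_neq0.
Qed.

Lemma mulu_D : u * D = P ^+ q0.
Proof. by rewrite u_def divfK ?D_neq0 // frobD expr1n. Qed.

Lemma mulu1_D : (u + 1) * D = P.
Proof. by rewrite mulrDl mulu_D mul1r frobD expr1n; ring: two_eq0. Qed.

Lemma scale_defect (v w t a b : F) : D * adj_defect v w t a b =
  (v * D) * (a ^+ q0 * a) + (w * D) * (b ^+ q0 * b) + D * (a ^+ q0 * b)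
  + (t * D) * ((a + b) ^+ q0 * (a + b)).
Proof. by rewrite /adj_defect; ring. Qed.

Lemma defect_eq0 (v w t a b : F) :
  (adj_defect v w t a b == 0) = (D * adj_defect v w t a b == 0).
Proof. by rewrite mulf_eq0 (negbTE D_neq0). Qed.

Definition hom_poly (a b : F) : F :=
  a ^+ q0 * a + u * (a ^+ q0 * b) + (u + 1) * (a * b ^+ q0) + b ^+ q0 * b.

Lemma hom_poly_neq0 (a b : F) : b != 0 -> hom_poly a b != 0.
Proof.
move=> b0; apply: contraNneq (no_root (a / b)) => hom0.
rewrite rootE !(hornerD, hornerCM, hornerXn, hornerX, hornerC).
apply/eqP/(mulIf (expf_neq0 q0.+1 b0)); rewrite mul0r -hom0 /hom_poly.
by rewrite !exprS exprMn exprVn; field; rewrite b0 expf_neq0.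
Qed.

Local Ltac defect_ring :=
  rewrite scale_defect ?mulu_D ?mulu1_D /qform !exprMn !frobD expr1n;
  ring: two_eq0.

Lemma adj_outer_outer (a b : F) : a != 0 -> b != 0 ->
  cay_adj q0 u (omega u a) (omega u b) = (a == eta * b) || (b == eta * a).
Proof.
move=> a0 b0; have [-> | neq_ab] := eqVneq a b.
  by rewrite cay_adj_omega eqxx eq_mull_self // orbb (negbTE eta_neq1).
have ab0 : a + b != 0 by rewrite -eq_char2.
have Du : D * adj_defect u (u + 1) u a b = qform (a + b) (P * b) by defect_ring.
have Du1 : D * adj_defect u (u + 1) (u + 1) a b = qform (a + b) (P * a).
  by defect_ring.
rewrite cay_adj_omega neq_ab !defect_eq0 Du Du1.
rewrite !qform_eq0 ?mulf_neq0 ?P_neq0 //=.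
by congr (_ || _); apply: eq_char2_addr; ring: two_eq0.
Qed.

Lemma adj_outer_inner (a b : F) : a != 0 -> b != 0 ->
  cay_adj q0 u (omega u a) (omega (u + 1) b) = (a == P * b).
Proof.
move=> a0 b0; have [-> | neq_ab] := eqVneq a b.
  by rewrite cay_adj_omega eqxx eq_mull_self // (negbTE P_neq1).
have Du : D * adj_defect u u u a b = qform a (P * b) by defect_ring.
have Du1 : adj_defect u u (u + 1) a b = hom_poly a b.
  by rewrite /adj_defect /hom_poly frobD; ring: two_eq0.
rewrite cay_adj_omega neq_ab addrK2 Du1 (negbTE (hom_poly_neq0 a b0)) orbF.
by rewrite defect_eq0 Du qform_eq0 ?mulf_neq0 ?P_neq0.
Qed.

Lemma adj_inner_outer (a b : F) : a != 0 -> b != 0 ->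
  cay_adj q0 u (omega (u + 1) a) (omega u b) = (P * a == b).
Proof.
move=> a0 b0; have [-> | neq_ab] := eqVneq a b.
  by rewrite cay_adj_omega eqxx /= eq_sym eq_mull_self // (negbTE P_neq1).
have Du : adj_defect (u + 1) (u + 1) u a b = hom_poly b a.
  by rewrite /adj_defect /hom_poly frobD; ring: two_eq0.
have Du1 : D * adj_defect (u + 1) (u + 1) (u + 1) a b = qform (P * a) b.
  by defect_ring.
rewrite cay_adj_omega neq_ab Du (negbTE (hom_poly_neq0 b a0)) /=.
by rewrite defect_eq0 Du1 qform_eq0 ?mulf_neq0 ?P_neq0.
Qed.

Lemma adj_inner_inner (a b : F) : a != 0 -> b != 0 ->
  cay_adj q0 u (omega (u + 1) a) (omega (u + 1) b) =
  (eta * a == P * b) || (eta * b == P * a).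
Proof.
move=> a0 b0; have [-> | neq_ab] := eqVneq a b.
  rewrite cay_adj_omega eqxx /= (inj_eq (mulIf b0)) orbb eq_sym.
  by rewrite -subr_eq0 addrK oner_eq0.
have ab0 : a + b != 0 by rewrite -eq_char2.
have Du : D * adj_defect (u + 1) u u a b = qform a (P * (a + b)) by defect_ring.
have Du1 : D * adj_defect (u + 1) u (u + 1) a b = qform b (P * (a + b)).
  by defect_ring.
rewrite cay_adj_omega neq_ab addrK2 !defect_eq0 Du Du1.
rewrite !qform_eq0 ?mulf_neq0 ?P_neq0 //=.
by congr (_ || _); apply: eq_char2_addr; ring: two_eq0.
Qed.

Lemma u1_neq_u : u + 1 != u.
Proof. by rewrite -subr_eq0 addrAC subrr add0r oner_neq0. Qed.

Section Labelling.
Variable k : int.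
Hypothesis eta_prim : (#|F|.-1).-primitive_root eta.
Hypothesis eta_k : 1 + eta = eta ^ (k + 1).

Local Notation n := #|F|.-1.

Definition weight (s : bool) : F := if s then u + 1 else u.

Definition label (x : bool * 'I_n) : F :=
  if x.1 then eta ^+ x.2 / P else eta ^+ x.2.

Definition vertex (x : bool * 'I_n) : 'M[F]_3 := omega (weight x.1) (label x).

Lemma label_neq0 (x : bool * 'I_n) : label x != 0.
Proof.
by case: x => [[] i]; rewrite /label ?mulf_neq0 ?invr_eq0 ?expf_neq0 ?P_neq0.
Qed.

Lemma expr_ord_eq (i j : 'I_n) : (eta ^+ i == eta ^+ j) = (i == j).
Proof. by rewrite (eq_prim_root_expr eta_prim) !modn_small. Qed.

Lemma expr_eq_mod (i j : 'I_n) (z : int) :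
  (eta ^+ i == eta ^ z * eta ^+ j) = (i%:Z == j%:Z + z %[mod n])%Z.
Proof. by rewrite -(prim_exprz_eq eta_prim) expfzDr // -!exprnP mulrC. Qed.

Lemma adj_vertex (x y : bool * 'I_n) :
  cay_adj q0 u (vertex x) (vertex y) = gpg_adj n k x y.
Proof.
have divPK (i : nat) : P * (eta ^+ i / P) = eta ^+ i.
  by rewrite mulrC divfK ?P_neq0.
have := label_neq0 x; have := label_neq0 y.
case: x y => [[] i] [[] j]; rewrite /vertex /label /weight /gpg_adj /= => b0 a0.
- rewrite adj_inner_inner // !mulrA !(inj_eq (mulIf (invr_neq0 P_neq0))).
  rewrite eta_k expfzDr // expr1z -!mulrA !(mulrCA _ eta).
  rewrite !(inj_eq (mulfI eta_neq0)).
  by rewrite !expr_eq_mod orbC.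
- by rewrite adj_inner_outer // divPK expr_ord_eq eq_sym.
- by rewrite adj_outer_inner // divPK expr_ord_eq orbF.
- by rewrite adj_outer_outer // !(expr_eq_mod _ _ 1) orbC.
Qed.

Lemma vertex_Conn (x : bool * 'I_n) : vertex x \in Conn q0 u.
Proof.
by rewrite /vertex /omega mem_Conn label_neq0; case: x.1; rewrite eqxx ?orbT.
Qed.

Lemma vertex_inj : injective vertex.
Proof.
move=> [s i] [t j] /(omega_inj (label_neq0 _))[eq_w]; rewrite /label /=.
have {eq_w} -> : t = s.
  case: s t eq_w => [] [] //= /eqP; rewrite ?(negbTE u1_neq_u) //.
  by rewrite eq_sym (negbTE u1_neq_u).
by case: s => [/(mulIf (invr_neq0 P_neq0))|] /eqP; rewrite expr_ord_eq => /eqP->.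
Qed.

Lemma vertex_surj (M : 'M[F]_3) : M \in Conn q0 u -> exists x, vertex x = M.
Proof.
rewrite inE => /orP[] /imsetP[a]; rewrite inE => a0 ->.
  by have [i ->] := prim_rootP eta_prim (expf_card_pred a0); exists (false, i).
have [i Ei] := prim_rootP eta_prim (expf_card_pred (mulf_neq0 a0 P_neq0)).
by exists (true, i); rewrite /vertex /label /= -Ei mulfK ?P_neq0.
Qed.

Lemma gpg_iso_neighbourhood :
  graph_iso (gpg_adj n k) (induced (cay_adj q0 u) (Conn q0 u)).
Proof.
pose f x : {M | M \in Conn q0 u} := exist _ (vertex x) (vertex_Conn x).
exists f; split=> [|x y]; last exact: adj_vertex.
apply: inj_card_bij => [x y /(congr1 val)/vertex_inj // |].
rewrite card_sig -(card_imset _ vertex_inj) subset_leq_card //.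
by apply/subsetP => M /vertex_surj[x <-]; apply: imset_f.
Qed.

End Labelling.

End Neighbourhood.
End Char2.

Theorem proposition6p3 (F : finFieldType) (f q0 : nat) (u eta : F) (k : int) :
  #|F| = (2 ^ f)%N ->
  (4 <= f)%N ->
  (exists e : nat, q0 = (2 ^ e)%N) ->
  (q0 < #|F|)%N ->
  coprime (#|F|.-1) (q0 ^ 2 - 1) ->
  u \in Uset F q0 ->
  (#|F|.-1).-primitive_root eta ->
  u = (1 + eta ^+ q0) / (eta + eta ^+ q0) ->
  1 + eta = eta ^ (k + 1) ->
  graph_iso (gpg_adj (#|F|.-1) k) (induced (cay_adj q0 u) (Conn q0 u)).
Proof.
move=> cardF f_ge4 [e q0E] _ co_q0 /setIdP[_ /existsPn no_root] eta_prim.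
move=> u_def eta_k.
have charF2 : 2 \in [pchar F] by apply: card_finPcharP cardF _.
have q0_2nat : 2%N.-nat q0 by rewrite q0E pnatX pnat_id.
have q0_coprime : coprime #|F|.-1 q0.-1.
  by apply: coprime_dvdr co_q0; rewrite (subn_sqr q0 1) subn1 dvdn_mulr.
have n_gt1 : (1 < #|F|.-1)%N.
  by rewrite cardF -subn1 ltn_subRL (leq_trans _ (leq_pexp2l _ f_ge4)).
have eta_neq1 : eta != 1.
  apply: contraTneq n_gt1 => eta1; have := prim_order_dvd eta_prim 1.
  by rewrite eta1 expr1n eqxx dvdn1 => /eqP->.
exact: (gpg_iso_neighbourhood charF2 q0_2nat q0_coprime
  (prim_root_neq0 eta_prim) eta_neq1 u_def no_root eta_prim eta_k).
Qed.
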